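(* Let $n_1,n_2$ be distinct primes and let $k>1$ be an integer with $\gcd(k,n_1)=\gcd(k,n_2)=1$, and suppose $n=n_1n_2$ is a pseudoprime of basis $k$. Then for all $r,s,q,p\in\mathbb{N}$, $$\frac{k^{\,r n_1^{q}+s n_2^{p}-(r+s)}-1}{n}\in\mathbb{N}.$$
   Context: A positive integer $n$ is called a pseudoprime of basis $k$ (where $k>1$ is an integer) if $n$ is an odd composite number, $\gcd(n,k)=1$, and $k^{n-1}\equiv 1 \pmod n$. $\mathbb{N}$ denotes the positive integers. *)

From mathcomp Require Import all_boot.

Definition pseudoprime (k n : nat) : Prop :=
  [/\ 1 < k, odd n, (1 < n) && ~~ prime n, coprime n k & k ^ (n - 1) = 1 %[mod n]].

From mathcomp Require Import all_boot cyclic zify.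

(* Modulo n1, Fermat gives k^(n1-1) = 1, and since
   n - 1 = (n1 - 1) n2 + (n2 - 1) the pseudoprime congruence k^(n-1) = 1
   yields k^(n2-1) = 1 as well.  The exponent r n1^q + s n2^p - (r + s) is
   r (n1^q - 1) + s (n2^p - 1), a combination of multiples of n1 - 1 and of
   n2 - 1, so k to that power is 1 modulo n1; symmetrically modulo n2, and
   the Chinese remainder theorem concludes. *)

Lemma expn_eqmod1_dvd k m d e :
  k ^ d = 1 %[mod m] -> d %| e -> k ^ e = 1 %[mod m].
Proof. by move=> kd1 /dvdnP[c ->]; rewrite mulnC expnM -modnXm kd1 modnXm exp1n. Qed.

Lemma expn_eqmod1D k m a b :
  k ^ a = 1 %[mod m] -> k ^ b = 1 %[mod m] -> k ^ (a + b) = 1 %[mod m].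
Proof. by move=> ka1 kb1; rewrite expnD -modnMm ka1 kb1 modnMm. Qed.

Lemma subn1_dvd_expn_subn1 a q : a - 1 %| a ^ q - 1.
Proof. rewrite -[X in _ %| _ - X](exp1n q) subn_exp; exact: dvdn_mulr. Qed.

Lemma fermat_little_pred k p : prime p -> coprime k p -> k ^ (p - 1) = 1 %[mod p].
Proof. by move=> p_pr kp; rewrite subn1 -totient_prime // Euler_exp_totient. Qed.

Section PrimeFactorOfPseudoprime.

Variables (k a b : nat).
Hypotheses (a_prime : prime a) (coprime_ka : coprime k a) (b_gt0 : 0 < b).
Hypothesis pseudo_mod_a : k ^ (a * b - 1) = 1 %[mod a].

Lemma expn_cofactor_pred_eqmod1 : k ^ (b - 1) = 1 %[mod a].
Proof.
have a_gt0 := prime_gt0 a_prime.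
have split_exp : a * b - 1 = (a - 1) * b + (b - 1).
  by rewrite mulnBl mul1n addnBA // subnK // leq_pmull.
have fermat_b : k ^ ((a - 1) * b) = 1 %[mod a].
  by apply: expn_eqmod1_dvd (dvdn_mulr b (dvdnn _)); apply: fermat_little_pred.
by rewrite -pseudo_mod_a split_exp expnD -modnMml fermat_b modnMml mul1n.
Qed.

Lemma combined_exponent_eqmod1 r s q p :
  k ^ (r * (a ^ q - 1) + s * (b ^ p - 1)) = 1 %[mod a].
Proof.
apply: expn_eqmod1D; apply: expn_eqmod1_dvd (dvdn_mull _ (subn1_dvd_expn_subn1 _ _)).
  exact: fermat_little_pred.
exact: expn_cofactor_pred_eqmod1.
Qed.

End PrimeFactorOfPseudoprime.

Lemma exponent_as_combination a b r s q p : 0 < a -> 0 < b ->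
  r * a ^ q + s * b ^ p - (r + s) = r * (a ^ q - 1) + s * (b ^ p - 1).
Proof.
move=> a_gt0 b_gt0.
have ra : r <= r * a ^ q by rewrite leq_pmulr ?expn_gt0 ?a_gt0.
have sb : s <= s * b ^ p by rewrite leq_pmulr ?expn_gt0 ?b_gt0.
rewrite !mulnBr !muln1; lia.
Qed.

Theorem mainTheorem3 (n1 n2 k : nat) :
  prime n1 -> prime n2 -> n1 != n2 -> 1 < k ->
  coprime k n1 -> coprime k n2 ->
  pseudoprime k (n1 * n2) ->
  forall r s q p : nat, 0 < r -> 0 < s -> 0 < q -> 0 < p ->
    let e := r * n1 ^ q + s * n2 ^ p - (r + s) in
    (n1 * n2) %| k ^ e - 1 /\ 0 < (k ^ e - 1) %/ (n1 * n2).
Proof.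
move=> n1_prime n2_prime n12 k_gt1 kn1 kn2 [_ _ _ _ pseudo] r s q p r_gt0 _ q_gt0 _ e.
have [n1_gt0 n2_gt0] := (prime_gt0 n1_prime, prime_gt0 n2_prime).
have e_comb : e = r * (n1 ^ q - 1) + s * (n2 ^ p - 1) by apply: exponent_as_combination.
have mod_n1 : k ^ e = 1 %[mod n1].
  rewrite e_comb; apply: combined_exponent_eqmod1 => //.
  by rewrite -(modn_dvdm _ (dvdn_mulr n2 (dvdnn n1))) pseudo modn_dvdm ?dvdn_mulr.
have mod_n2 : k ^ e = 1 %[mod n2].
  rewrite e_comb addnC; apply: combined_exponent_eqmod1 => //.
  by rewrite mulnC -(modn_dvdm _ (dvdn_mull n1 (dvdnn n2))) pseudo modn_dvdm ?dvdn_mull.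
have n_dvd : n1 * n2 %| k ^ e - 1.
  rewrite -eqn_mod_dvd ?expn_gt0 ?(ltnW k_gt1) // chinese_remainder.
    by rewrite mod_n1 mod_n2 !eqxx.
  by rewrite prime_coprime // dvdn_prime2.
have e_gt0 : 0 < e.
  by rewrite e_comb ltn_addr // muln_gt0 r_gt0 subn_gt0 -{1}(expn0 n1) ltn_exp2l ?prime_gt1.
have ke_gt1 : 1 < k ^ e by rewrite -{1}(expn0 k) ltn_exp2l.
by split; rewrite // divn_gt0 ?muln_gt0 ?n1_gt0 // dvdn_leq ?subn_gt0.
Qed.
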